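(* For every nonzero $\lambda\in\mathbb{C}$, the function $f_\lambda(t)=\frac{1}{(1-\lambda t)(1-\lambda^{-1}t)}$ is symplectic at $t=1$ of order $2$.
   Context: A formal power series $\varphi(x)=\sum_{i\ge0}\gamma_i x^i\in\mathbb{C}[[x]]$ is called symplectic if for every $m\ge1$ one has $\sum_{k=0}^{m-1}(-1)^k\binom{m-1}{k}\gamma_{m+k}=0$. A meromorphic function $\psi(t)$ whose pole at $t=a$ has order at most $d$ is called symplectic at $a$ of order $d$ if the formal power series $x^d\psi(a-x)\in\mathbb{C}[[x]]$ is symplectic. *)

From HB Require Import structures.
From mathcomp Require Import all_boot all_order all_algebra.
From mathcomp Require Import complex.
Set Implicit Arguments. Unset Strict Implicit. Unset Printing Implicit Defensive.
Import Order.TTheory GRing.Theory Num.Theory.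
Local Open Scope ring_scope.

(* A formal power series in C[[x]] is represented by its coefficient
   sequence  gamma : nat -> C  (gamma i = coefficient of x^i). *)

Definition symplectic (C : comRingType) (gamma : nat -> C) : Prop :=
  forall m : nat, (0 < m)%N ->
    \sum_(k < m) (-1) ^+ k * ('C(m.-1, k))%:R * gamma (m + k)%N = 0.

Definition ser_mul_poly (C : comRingType) (gamma : nat -> C) (p : {poly C})
  : nat -> C :=
  fun n => \sum_(k < n.+1) gamma k * p`_(n - k).

Definition ser_of_poly (C : comRingType) (p : {poly C}) : nat -> C :=
  fun n => p`_n.

(* The rational function psi = P/Q (Q <> 0) is symplectic at a of order d:
   x^d psi(a - x) = x^d P(a-x) / Q(a-x) lies in C[[x]], i.e. there is a
   power series gamma with gamma * Q(a-x) = x^d P(a-x) in C[[x]] (this is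
   exactly "the pole at a has order at most d"), and this power series
   (unique, as C[[x]] is a domain and Q(a-x) <> 0) is symplectic. *)
Definition rat_symplectic_at (C : comRingType) (P Q : {poly C}) (a : C)
  (d : nat) : Prop :=
  let Qa := Q \Po (a%:P - 'X) in
  let Pa := 'X^d * (P \Po (a%:P - 'X)) in
  (exists gamma : nat -> C, ser_mul_poly gamma Qa = ser_of_poly Pa) /\
  (forall gamma : nat -> C, ser_mul_poly gamma Qa = ser_of_poly Pa ->
     symplectic gamma).

(* At t = 1 - x the denominator of f_lambda becomes q - q x + x^2 with
   q = (1 - lambda)(1 - lambda^-1), so the series g = x^2 f_lambda(1 - x)
   satisfies g_0 = g_1 = 0 and q (g_{i+1} - g_{i+2}) = g_i for i >= 1.
   The symplectic sums are the finite differences Delta^{m-1} g at m (up to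
   sign), and iterating the recurrence gives
   q^p Delta^p g (p + 1) = g_1 = 0.  When q = 0 (lambda = 1), g is just the
   constant 1 and there is nothing to prove. *)
From HB Require Import structures.
From mathcomp Require Import all_boot all_order all_algebra.
From mathcomp Require Import complex ring.
From Stdlib Require Import FunctionalExtensionality.
Import Order.TTheory GRing.Theory Num.Theory.
Local Open Scope ring_scope.

Section QuadraticDenominator.
Variable C : fieldType.

Lemma comp_1subX_reciprocal_factors (l : C) : l != 0 ->
  ((1 - l *: 'X) * (1 - l^-1 *: 'X) : {poly C}) \Po (1%:P - 'X) =
  ((1 - l) * (1 - l^-1))%:P - ((1 - l) * (1 - l^-1)) *: 'X + 'X^2.
Proof.
move=> l0.
rewrite comp_polyM !comp_polyB !comp_polyZ comp_polyX -polyC1 comp_polyC.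
rewrite -!mul_polyC !rmorphM !rmorphB /= polyC1.
have : l%:P * l^-1%:P = 1 :> {poly C} by rewrite -rmorphM mulfV // polyC1.
move: (l%:P) (l^-1%:P) => a b ab1.
apply/eqP; rewrite -subr_eq0; apply/eqP.
match goal with |- ?u - ?v = 0 =>
  have -> : u - v = (1 - a * b) * ('X - 'X^2) by ring end.
by rewrite ab1 subrr mul0r.
Qed.

Lemma ser_mul_quadratic (q : C) (g : nat -> C) (n : nat) :
  ser_mul_poly g (q%:P - q *: 'X + 'X^2) n =
  match n with
  | 0 => q * g 0%N
  | 1 => q * g 1%N - q * g 0%N
  | n'.+2 => q * g n'.+2 - q * g n'.+1 + g n'
  end.
Proof.
have -> : ser_mul_poly g (q%:P - q *: 'X + 'X^2) n =
    \sum_(j < n.+1) g (n - j)%N * (q%:P - q *: 'X + 'X^2)`_j.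
  rewrite /ser_mul_poly (reindex_inj rev_ord_inj) /=; apply: eq_bigr => j _.
  by rewrite subSS subKn // -ltnS.
case: n => [|[|n]].
- by rewrite big_ord1 /= !coefE /=; ring.
- by rewrite !big_ord_recl big_ord0 /= !coefE /=; ring.
rewrite !big_ord_recl big1 /=.
  by rewrite !coefE /= subn0 !subSS subn0 /bump /= subn0; ring.
by move=> i _; rewrite !coefE /=; ring.
Qed.

(* [fdiff g p j] is (-1)^p times the p-th forward difference of g at j; the
   symplectic condition for m = p.+1 reads [fdiff g p p.+1 = 0]. *)
Definition fdiff (g : nat -> C) (p j : nat) : C :=
  \sum_(k < p.+1) (-1) ^+ k * ('C(p, k))%:R * g (j + k)%N.

Lemma fdiffS (g : nat -> C) (p j : nat) :
  fdiff g p.+1 j = fdiff g p j - fdiff g p j.+1.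
Proof.
have -> : fdiff g p j = \sum_(k < p.+2) (-1) ^+ k * ('C(p, k))%:R * g (j + k)%N.
  by rewrite big_ord_recr /= bin_small // mulr0 mul0r addr0.
rewrite /fdiff big_ord_recl [in RHS]big_ord_recl /= !bin0 !addn0 -addrA.
congr (_ + _); rewrite -sumrB; apply: eq_bigr => k _.
rewrite binS natrD exprS /bump /= add1n addnS addSn; ring.
Qed.

Section Recurrence.
Variables (q : C) (g : nat -> C).
Hypothesis q_neq0 : q != 0.
Hypothesis g_rec : forall i, q * (g i.+2 - g i.+3) = g i.+1.

Lemma fdiff_rec (p i : nat) : q ^+ p * fdiff g p (i + p).+1 = g i.+1.
Proof.
elim: p i => [|p IHp] i.
  by rewrite /fdiff big_ord1 /= bin0 expr0 !mul1r !addn0.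
rewrite fdiffS exprS -mulrA mulrBr.
have -> : (i + p.+1).+1 = (i.+1 + p).+1 by rewrite addnS addSn.
have -> : (i.+1 + p).+2 = (i.+2 + p).+1 by rewrite addSn.
by rewrite !IHp.
Qed.

Lemma symplectic_rec : g 1%N = 0 -> symplectic g.
Proof.
move=> g1 [//|p] _; apply/eqP.
have := fdiff_rec p 0; rewrite add0n g1 => /eqP.
by rewrite mulf_eq0 expf_eq0 (negbTE q_neq0) andbF.
Qed.

End Recurrence.

Lemma symplectic_quadratic_quotient (q : C) (g : nat -> C) :
  ser_mul_poly g (q%:P - q *: 'X + 'X^2) = ser_of_poly 'X^2 -> symplectic g.
Proof.
move=> Hg.
have E n : ser_mul_poly g (q%:P - q *: 'X + 'X^2) n = (n == 2)%:R.
  by rewrite Hg /ser_of_poly coefXn.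
have [q0|q_neq0] := eqVneq q 0.
  have g_succ j : g j.+1 = 0.
    by have := E j.+3; rewrite ser_mul_quadratic q0 !mul0r subrr add0r.
  by move=> [//|m] _; apply: big1 => k _; rewrite addSn g_succ mulr0.
have g0 : g 0%N = 0.
  by apply/eqP; have /eqP := E 0%N; rewrite ser_mul_quadratic mulf_eq0 (negbTE q_neq0).
apply: (@symplectic_rec q g q_neq0).
  move=> i; have := E i.+3; rewrite ser_mul_quadratic /= mulr0n => h.
  apply/eqP; rewrite -subr_eq0 -oppr_eq0; apply/eqP; rewrite -[RHS]h; ring.
apply/eqP; have /eqP := E 1%N.
by rewrite ser_mul_quadratic g0 mulr0 subr0 mulf_eq0 (negbTE q_neq0).
Qed.

Fixpoint quadratic_quotient (q : C) (n : nat) : C :=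
  match n with
  | 0 | 1 => 0
  | (n'.+1 as m).+1 =>
      quadratic_quotient q m + ((n' == 0)%:R - quadratic_quotient q n') / q
  end.

Lemma quadratic_quotientP (q : C) : q != 0 ->
  ser_mul_poly (quadratic_quotient q) (q%:P - q *: 'X + 'X^2) = ser_of_poly 'X^2.
Proof.
move=> q_neq0; apply: functional_extensionality => n.
rewrite ser_mul_quadratic /ser_of_poly coefXn.
case: n => [|[|n]] /=; rewrite ?mulr0 ?subr0 //.
by rewrite mulrDr mulrCA mulfV // mulr1; ring.
Qed.

Lemma exists_quadratic_quotient (q : C) :
  exists g : nat -> C,
    ser_mul_poly g (q%:P - q *: 'X + 'X^2) = ser_of_poly 'X^2.
Proof.
have [->|q_neq0] := eqVneq q 0; last first.
  by exists (quadratic_quotient q); exact: quadratic_quotientP.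
exists (fun n => (n == 0)%:R); apply: functional_extensionality => n.
rewrite ser_mul_quadratic /ser_of_poly coefXn.
by case: n => [|[|n]] /=; rewrite ?mul0r ?subr0 ?add0r.
Qed.

End QuadraticDenominator.

Local Open Scope complex_scope.

Theorem lemma6p1 (R : rcfType) (lambda : R[i]) (hl : lambda != 0) :
  rat_symplectic_at 1
    ((1 - lambda *: 'X) * (1 - lambda^-1 *: 'X) : {poly R[i]}) 1 2.
Proof.
have comp1 : (1 : {poly R[i]}) \Po (1%:P - 'X) = 1 by rewrite -polyC1 comp_polyC.
rewrite /rat_symplectic_at comp_1subX_reciprocal_factors // comp1 mulr1.
set q := (1 - lambda) * (1 - lambda^-1).
split; [exact: (@exists_quadratic_quotient _ q) | exact: (@symplectic_quadratic_quotient _ q)].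
Qed.
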